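(* Let $(X,\sigma_X)$, $(Y,\sigma_Y)$ be one-sided irreducible sofic shifts and $\pi:X\to Y$ a one-block factor map, and suppose $X$ has the specification property. Let $\mu\in M(X,\sigma_X)$ be the unique measure of maximal entropy of $(X,\sigma_X)$ and $\nu=\pi\mu$. Then $\mu$ is the unique relative equilibrium state for $0$ over $\nu$, i.e. $\mu$ is the unique $\bar\mu\in M(X,\sigma_X)$ with $\pi\bar\mu=\nu$ and $h_{\bar\mu}(\sigma_X)=\sup\{h_{\mu'}(\sigma_X):\mu'\in M(X,\sigma_X),\pi\mu'=\nu\}$.
   Context: Sofic shifts are one-sided subshifts (closed shift-invariant subsets of $\{1,\dots,k\}^{\mathbb N}$) that are images of shifts of finite type under factor maps; irreducible means for any allowable words $u,v$ there is $w$ with $uwv$ allowable. Specification: there is a fixed $p>0$ such that for all allowable $u,v$ some $w$ of length $p$ makes $uwv$ allowable. A factor map is a continuous surjection commuting with the shifts; one-block means $\pi(x)_i$ depends only on $x_i$. $M(X,\sigma_X)$ denotes invariant Borel probability measures and $h$ entropy. *)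

From HB Require Import structures.
From mathcomp Require Import all_boot all_algebra all_classical all_reals all_analysis.
Unset Printing Implicit Defensive.
Import GRing.Theory Num.Theory numFieldNormedType.Exports.
Local Open Scope classical_set_scope.
Local Open Scope ring_scope.

Definition seqsp (k : nat) := nat -> 'I_k.+1.
HB.instance Definition _ k := Choice.on (seqsp k).
HB.instance Definition _ k := isPointed.Build (seqsp k) (fun _ => ord0).

Definition shift {A : Type} (x : nat -> A) : nat -> A := fun n => x n.+1.

Definition subword {A : Type} (x : nat -> A) (j n : nat) : seq A :=
  mkseq (fun i => x (j + i)%N) n.

Definition agree {A : Type} (n : nat) (x y : nat -> A) := forall i, (i < n)%N -> x i = y i.

(* closed in the product topology (discrete alphabet), written out *)
Definition closed_seq {A : Type} (X : set (nat -> A)) :=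
  forall x, (forall n, exists y, X y /\ agree n x y) -> X x.

Definition subshift {A : Type} (X : set (nat -> A)) :=
  closed_seq X /\ (forall x, X x -> X (shift x)).

Definition allowable {A : Type} (X : set (nat -> A)) (w : seq A) :=
  exists x j, X x /\ subword x j (size w) = w.

Definition irreducible {A : Type} (X : set (nat -> A)) :=
  forall u v, allowable X u -> allowable X v ->
    exists w, allowable X (u ++ w ++ v).

Definition specification {A : eqType} (X : set (nat -> A)) :=
  exists p : nat, (0 < p)%N /\ forall u v, allowable X u -> allowable X v ->
    exists w : seq A, size w = p /\ allowable X (u ++ w ++ v).

Definition SFT {A : eqType} (Z : set (nat -> A)) :=
  exists F : seq (seq A),
    Z = [set x | forall w, w \in F -> forall j, subword x j (size w) != w].

(* factor map from Z onto X: continuous surjection commuting with the shifts *)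
Definition factor_map {A B : Type} (Z : set (nat -> A)) (X : set (nat -> B))
    (phi : (nat -> A) -> (nat -> B)) :=
  [/\ phi @` Z = X,
      (forall x, Z x -> forall n, exists m, forall y, Z y -> agree m x y ->
           agree n (phi x) (phi y))
    & (forall x, Z x -> phi (shift x) = shift (phi x))].

Definition sofic {A : Type} (X : set (nat -> A)) :=
  subshift X /\
  exists (m : nat) (Z : set (nat -> 'I_m.+1)) (phi : (nat -> 'I_m.+1) -> (nat -> A)),
    SFT Z /\ factor_map Z X phi.

(* Measurable structure: Borel sigma-algebra of the full shift, generated by cylinders *)
Definition cylinders (k : nat) : set (set (seqsp k)) :=
  [set C | exists w : seq 'I_k.+1, C = [set x | subword x 0 (size w) = w]].

Definition Omega (k : nat) := g_sigma_algebraType (cylinders k).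

Section Measures.
Variables (R : realType) (k : nat).

Definition invariant (mu : probability (Omega k) R) :=
  forall A : set (Omega k), measurable A -> mu (shift @^-1` A) = mu A.

(* M(X, sigma_X): invariant probability measures on the full shift concentrated on X *)
Definition inM (X : set (seqsp k)) (mu : probability (Omega k) R) :=
  invariant mu /\ mu X = 1%E.

Definition meq (mu1 mu2 : probability (Omega k) R) :=
  forall A : set (Omega k), measurable A -> mu1 A = mu2 A.

Definition is_partition (m : nat) (P : 'I_m -> set (Omega k)) :=
  [/\ forall i, measurable (P i),
      forall i j, i != j -> P i `&` P j = set0
    & \bigcup_i P i = setT].

Definition etaH (t : R) : R := - (t * ln t).

Definition part_entropy (mu : probability (Omega k) R) (I : finType)
    (Q : I -> set (Omega k)) : R :=
  \sum_(i : I) etaH (fine (mu (Q i))).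

Definition join_part (m n : nat) (P : 'I_m -> set (Omega k))
    (c : {ffun 'I_n -> 'I_m}) : set (Omega k) :=
  [set x | forall j : 'I_n, P (c j) (iter j shift x)].

Definition entropy_part (mu : probability (Omega k) R) (m : nat)
    (P : 'I_m -> set (Omega k)) : R :=
  limn (fun n => (n.+1%:R)^-1 * part_entropy mu {ffun 'I_n.+1 -> 'I_m} (join_part m n.+1 P)).

Definition ks_entropy (mu : probability (Omega k) R) : \bar R :=
  ereal_sup [set e | exists (m : nat) (P : 'I_m -> set (Omega k)),
                 is_partition m P /\ e = (entropy_part mu m P)%:E].
End Measures.

Arguments invariant {R k}.
Arguments inM {R k}.
Arguments meq {R k}.
Arguments is_partition {k m}.
Arguments part_entropy {R k}.
Arguments join_part {k m n}.
Arguments entropy_part {R k} mu {m}.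
Arguments ks_entropy {R k}.

Definition oneblock {k l : nat} (f : 'I_k.+1 -> 'I_l.+1) (x : seqsp k) : seqsp l :=
  f \o x.

From HB Require Import structures.
From mathcomp Require Import all_boot all_algebra all_classical all_reals all_analysis.
Local Open Scope classical_set_scope.
Local Open Scope ring_scope.
Import mathcomp.order.order.Order.TTheory.

(* The fiber over [pi mu] is a subset of [M(X, sigma_X)] containing [mu], and
   [mu] maximizes entropy on all of [M(X, sigma_X)]; so [mu] maximizes entropy
   on the fiber, and every maximizer on the fiber is a global maximizer, hence
   equal to [mu] by uniqueness of the measure of maximal entropy.  The
   sofic/irreducibility/specification hypotheses only serve to guarantee that
   unique measure of maximal entropy, which the statement already assumes. *)

Section RestrictedMaximum.
Variables (R : realType) (T : Type) (F : T -> \bar R) (A B : set T).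
Hypothesis BA : B `<=` A.

Lemma ereal_sup_image_le_subset : (ereal_sup (F @` B) <= ereal_sup (F @` A))%E.
Proof. by apply: ereal_sup_le => _ [x Bx <-]; exists x => //; apply: BA. Qed.

Lemma ereal_sup_image_subset_max (a : T) :
  B a -> F a = ereal_sup (F @` A) -> F a = ereal_sup (F @` B).
Proof.
move=> Ba Fa_max; apply: le_anti; apply/andP; split.
  by apply: ereal_sup_ubound; exists a.
by rewrite Fa_max ereal_sup_image_le_subset.
Qed.

Lemma subset_maximizer_max (a x : T) : B a -> F a = ereal_sup (F @` A) ->
  F x = ereal_sup (F @` B) -> F x = ereal_sup (F @` A).
Proof. by move=> Ba Fa_max ->; rewrite -(ereal_sup_image_subset_max _ Ba). Qed.

End RestrictedMaximum.

Theorem corollary4p7 (R : realType) (k l : nat)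
  (X : set (seqsp k)) (Y : set (seqsp l)) (f : 'I_k.+1 -> 'I_l.+1)
  (mu : probability (Omega k) R) :
  sofic X -> irreducible X -> sofic Y -> irreducible Y ->
  factor_map X Y (oneblock f) ->
  specification X ->
  inM X mu ->
  ks_entropy mu = ereal_sup [set ks_entropy m | m in [set m | inM X m]] ->
  (forall m : probability (Omega k) R, inM X m ->
     ks_entropy m = ereal_sup [set ks_entropy m' | m' in [set m' | inM X m']] ->
     meq m mu) ->
  let nu := fun B : set (Omega l) => mu (oneblock f @^-1` B) in
  let fiber := [set m : probability (Omega k) R | inM X m /\
        forall B : set (Omega l), measurable B -> m (oneblock f @^-1` B) = nu B] in
  fiber mu /\
  ks_entropy mu = ereal_sup [set ks_entropy m | m in fiber] /\
  (forall m, fiber m -> ks_entropy m = ereal_sup [set ks_entropy m' | m' in fiber] ->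
     meq m mu).
Proof.
move=> _ _ _ _ _ _ mu_inM mu_max mu_unique nu fiber.
have fiber_sub : fiber `<=` [set m | inM X m] by move=> m [].
have fiber_mu : fiber mu by [].
split=> //; split; first exact: ereal_sup_image_subset_max mu_max.
move=> m [m_inM _] m_max; apply: mu_unique => //.
exact: subset_maximizer_max fiber_mu mu_max m_max.
Qed.
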